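(* Let $q$ be a power of an odd prime, $0<r_1<r_2<\cdots<r_k<n$ integers, $a_1,\dots,a_k\in\mathbb{F}_{q^n}^*$, $S(x)=\sum_{i=1}^k a_ix^{q^{r_i}}$, and $0<t<n$. (1) If $0<t<r_1$ and the multiplicative order of each $a_i$ ($i=1,\dots,k$) divides $q^t-1$, then $S(x)$ is a scattered polynomial of index $t$ over $\mathbb{F}_{q^n}$ if and only if $S^t(x)=\sum_{i=1}^k a_ix^{q^{r_i-t}}$ is a scattered polynomial of index $0$ over $\mathbb{F}_{q^n}$. (2) If $r_1<t<n$ and the multiplicative order of each $a_i$ ($i=1,\dots,k$) divides $q^{r_1}-1$, then $S(x)$ is a scattered polynomial of index $t$ over $\mathbb{F}_{q^n}$ if and only if $T(x)=a_1x+\sum_{i=2}^k a_ix^{q^{r_i-r_1}}$ is a scattered polynomial of index $t-r_1$ over $\mathbb{F}_{q^n}$.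
   Context: An $\mathbb{F}_q$-linearized polynomial $S\in\mathbb{F}_{q^n}[x]$ is a scattered polynomial of index $t$ over $\mathbb{F}_{q^n}$ if for all $y,z\in\mathbb{F}_{q^n}^*$, $\frac{S(y)}{y^{q^t}}=\frac{S(z)}{z^{q^t}}$ implies $y/z\in\mathbb{F}_q$. *)

From mathcomp Require Import all_boot all_order all_algebra all_fingroup all_field.
Set Implicit Arguments. Unset Strict Implicit. Unset Printing Implicit Defensive.
Import GRing.Theory.
Local Open Scope ring_scope.

(* Multiplicative order of an element of a finite field: the order of the
   corresponding element of the unit group {unit L}; 0 for a = 0 (never used). *)
Definition morder (L : finFieldType) (a : L) : nat :=
  match insub a : option {unit L} with
  | Some u => #[u]%g
  | None => 0%N
  end.

Definition in_Fq (L : finFieldType) (q : nat) (x : L) : bool := x ^+ q == x.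

Definition scattered (L : finFieldType) (q : nat) (f : L -> L) (t : nat) : Prop :=
  forall y z : L, y != 0 -> z != 0 ->
    f y / y ^+ (q ^ t) = f z / z ^+ (q ^ t) -> in_Fq q (y / z).

(* Since the q-Frobenius is an additive bijection of L, scatteredness of index
   [s] is unchanged when f is replaced by y |-> f(y)^(q^u) and the index by
   [s + u]: the quotients f(y)/y^(q^s) are merely raised to the power q^u.
   When every coefficient a_i is fixed by the q^u-Frobenius (which is what the
   order conditions say) and u <= r_i for all i, the linearized polynomial
   S = sum a_i y^(q^(r_i)) is the q^u-th power of sum a_i y^(q^(r_i - u)).
   Taking u = t gives (1), and u = r_1 gives (2). *)

From mathcomp Require Import all_boot all_order all_algebra all_fingroup all_field.
Local Open Scope ring_scope.
Import GRing.Theory FinRing.Theory.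

Section FrobeniusPower.
Variables (F : fieldType) (N : nat).
Hypothesis pcharN : [pchar F].-nat N.

Lemma expr_sum_pnat (I : Type) (s : seq I) (P : pred I) (G : I -> F) :
  (\sum_(i <- s | P i) G i) ^+ N = \sum_(i <- s | P i) G i ^+ N.
Proof.
apply: (big_morph (fun x => x ^+ N) (fun x y => exprDn_pchar x y pcharN)).
by case/andP: pcharN => N_gt0 _; rewrite expr0n eqn0Ngt N_gt0.
Qed.

Lemma expr_pnat_inj : injective (fun x : F => x ^+ N).
Proof.
move=> x y /= eqxyN; apply/eqP; rewrite -subr_eq0.
have := exprDn_pchar (x - y) y pcharN; rewrite subrK eqxyN -[LHS]add0r => /addIr/eqP.
by rewrite eq_sym expf_eq0 => /andP[_].
Qed.

End FrobeniusPower.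

Lemma expr_id_morder (L : finFieldType) (a : L) (N : nat) :
  (0 < N)%N -> (morder a %| N - 1)%N -> a ^+ N = a.
Proof.
rewrite /morder; case: insubP => [u _ <-|]; last first.
  by rewrite unitfE negbK => /eqP -> N_gt0; rewrite dvd0n subn_eq0 => N_le1;
     rewrite expr0n -leqn0 leqNgt N_gt0.
move=> N_gt0 /dvdnP[c dvdN]; rewrite -(subnK N_gt0) dvdN exprD expr1 mulnC.
by rewrite exprM -val_unitX expg_order val_unit1 expr1n mul1r.
Qed.

Lemma linearized_exprX (F : fieldType) (q u : nat) (I : finType)
    (c : I -> F) (e : I -> nat) (y : F) :
  [pchar F].-nat (q ^ u)%N -> (forall i, u <= e i)%N ->
  (forall i, c i ^+ (q ^ u) = c i) ->
  \sum_i c i * y ^+ (q ^ e i) = (\sum_i c i * y ^+ (q ^ (e i - u))) ^+ (q ^ u).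
Proof.
move=> pcharq u_le_e c_fixed; rewrite expr_sum_pnat //; apply: eq_bigr => i _.
by rewrite exprMn c_fixed -exprM -expnD subnK.
Qed.

Lemma eq_scattered (L : finFieldType) (q : nat) (f g : L -> L) (t : nat) :
  f =1 g -> scattered q f t <-> scattered q g t.
Proof.
by move=> eq_fg; split=> scat y z y0 z0; [rewrite -!eq_fg | rewrite !eq_fg];
   apply: scat.
Qed.

Lemma scattered_exprX (L : finFieldType) (q s u : nat) (f : L -> L) :
  [pchar L].-nat (q ^ u)%N ->
  scattered q (fun y => f y ^+ (q ^ u)) (s + u) <-> scattered q f s.
Proof.
move=> pcharq.
have quotX y : f y ^+ (q ^ u) / y ^+ (q ^ (s + u)) = (f y / y ^+ (q ^ s)) ^+ (q ^ u).
  by rewrite expnD exprM exprMn exprVn.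
split=> scat y z y0 z0 eq_yz; apply: scat => //; rewrite ?quotX.
  by rewrite eq_yz.
by apply: (@expr_pnat_inj _ _ pcharq); rewrite -!quotX.
Qed.

Theorem mainTheorem6 (L : finFieldType) (p m n k : nat)
  (r : 'I_k.+1 -> nat) (a : 'I_k.+1 -> L) (t : nat) :
  prime p -> odd p -> (0 < m)%N ->
  #|L| = ((p ^ m) ^ n)%N ->
  (forall i, 0 < r i)%N ->
  (forall i j : 'I_k.+1, (i < j)%N -> (r i < r j)%N) ->
  (forall i, r i < n)%N ->
  (forall i, a i != 0) ->
  (0 < t)%N -> (t < n)%N ->
  let q := (p ^ m)%N in
  let S := fun y : L => \sum_(i < k.+1) a i * y ^+ (q ^ r i) in
  ((t < r ord0)%N -> (forall i, morder (a i) %| q ^ t - 1)%N ->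
     (scattered q S t <->
      scattered q (fun y => \sum_(i < k.+1) a i * y ^+ (q ^ (r i - t))) 0))
  /\
  ((r ord0 < t)%N -> (forall i, morder (a i) %| q ^ r ord0 - 1)%N ->
     (scattered q S t <->
      scattered q (fun y => a ord0 * y
                     + \sum_(i < k.+1 | i != ord0) a i * y ^+ (q ^ (r i - r ord0)))
                (t - r ord0))).
Proof.
move=> p_pr _ _ cardL _ r_incr _ _ _ _ q S.
have pcharL : p \in [pchar L].
  by apply: (card_finPcharP (n := (m * n)%N)) => //; rewrite expnM.
have pcharq u : [pchar L].-nat (q ^ u)%N.
  by rewrite -expnM pnatX (eq_pnat _ (pcharf_eq pcharL)) pnat_id.
have q_gt0 u : (0 < q ^ u)%N by rewrite !expn_gt0 prime_gt0.
have r0_le i : (r ord0 <= r i)%N.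
  case: (posnP i) => [i0 | i_gt0]; last exact: ltnW (r_incr ord0 i i_gt0).
  by rewrite (_ : i = ord0) //; apply: val_inj.
split=> [t_lt_r0 a_ord | r0_lt_t a_ord].
- rewrite -[X in scattered _ S X]add0n.
  apply: (iff_trans _ (@scattered_exprX _ _ _ _ _ (pcharq t))); apply: eq_scattered => y.
  apply: linearized_exprX => // [i | i]; first exact: leq_trans (ltnW t_lt_r0) (r0_le i).
  exact: expr_id_morder (q_gt0 t) (a_ord i).
- rewrite -[X in scattered _ S X](subnK (ltnW r0_lt_t)).
  apply: (iff_trans _ (@scattered_exprX _ _ _ _ _ (pcharq (r ord0)))).
  apply: eq_scattered => y.
  rewrite (_ : _ + _ = \sum_i a i * y ^+ (q ^ (r i - r ord0))); last first.
    by rewrite [RHS](bigD1 ord0) //= subnn expn0 expr1.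
  by apply: linearized_exprX => // i; apply: expr_id_morder (q_gt0 _) (a_ord i).
Qed.
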